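(* Let $\mathcal{A}$ be a central and essential arrangement in $\mathbb{Q}^l$ as in the context, $\sigma$ a term ordering and $p$ a prime. If $p$ is $(\sigma,2)$-lucky for $\mathcal{A}$, then $p$ is good for $\mathcal{A}$.
   Context: $\mathcal{A}=\{H_1,\dots,H_n\}$: $n$ distinct linear hyperplanes in $\mathbb{Q}^l$ with $\bigcap H_i=\{0\}$, $H_i=\{\alpha_i=0\}$, $\alpha_i\in\mathbb{Z}[x_1,\dots,x_l]$ a nonzero linear form whose coefficients are not all divisible by any prime, $Q(\mathcal{A})=\prod\alpha_i$. $p$ is good for $\mathcal{A}$ if the reduction of $Q(\mathcal{A})$ mod $p$ is reduced, equivalently the reductions $(\alpha_i)_p,(\alpha_j)_p$ are not scalar multiples of one another for all $i<j$. For a term ordering $\sigma$ and nonzero $f\in\mathbb{Z}[x_1,\dots,x_l]$, $\mathrm{LM}_\sigma(f)$ is the $\sigma$-leading term times its coefficient $\mathrm{LC}_\sigma(f)$. A minimal strong $\sigma$-Gröbner basis of an ideal $I\subseteq\mathbb{Z}[x_1,\dots,x_l]$ is a finite generating set $G$ of nonzero elements of $I$ such that every nonzero $f\in I$ has $\mathrm{LM}_\sigma(f)$ divisible by some $\mathrm{LM}_\sigma(g)$, $g\in G$, and no $\mathrm{LM}_\sigma(g)$ divides $\mathrm{LM}_\sigma(g')$ for distinct $g,g'$; its set of leading coefficients is independent of the choice. $p$ is $\sigma$-lucky for $I$ if it divides none of them. For $1\le k\le n$, $p$ is $(\sigma,k)$-lucky for $\mathcal{A}$ if it is $\sigma$-lucky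 for every ideal $\langle\alpha_{i_1},\dots,\alpha_{i_k}\rangle\subseteq\mathbb{Z}[x_1,\dots,x_l]$ with $i_1<\dots<i_k$ and $\operatorname{codim}(H_{i_1}\cap\dots\cap H_{i_k})=k$. *)

From HB Require Import structures.
From mathcomp Require Import all_boot all_order all_algebra.
From mathcomp Require Import mpoly.
Set Implicit Arguments. Unset Strict Implicit. Unset Printing Implicit Defensive.
Import Order.TTheory GRing.Theory Num.Theory.
Local Open Scope ring_scope.

(* An arrangement of n hyperplanes in Q^l is given by integer coefficient
   vectors a : 'I_n -> 'I_l -> int; alpha_i = \sum_j a i j * x_j. *)

Definition arr_mx (l n : nat) (a : 'I_n -> 'I_l -> int) : 'M[rat]_(l, n) :=
  \matrix_(j < l, i < n) (a i j)%:~R.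

Definition hyp (l n : nat) (a : 'I_n -> 'I_l -> int) (i : 'I_n) : pred 'rV[rat]_l :=
  [pred x | x *m col i (arr_mx a) == 0].

(* matrix whose columns are those of arr_mx a indexed by S, others zero;
   its left kernel is the intersection of the H_i, i in S *)
Definition arr_mxS (l n : nat) (a : 'I_n -> 'I_l -> int) (S : {set 'I_n}) : 'M[rat]_(l, n) :=
  \matrix_(j < l, i < n) (if i \in S then (a i j)%:~R else 0).

Definition codim_int (l n : nat) (a : 'I_n -> 'I_l -> int) (S : {set 'I_n}) : nat :=
  (l - \rank (kermx (arr_mxS a S)))%N.

(* standing assumptions: distinct hyperplanes, nonzero primitive forms,
   central (automatic: linear forms) and essential *)
Definition arrangement (l n : nat) (a : 'I_n -> 'I_l -> int) : Prop :=
  [/\ (forall i, exists j, a i j != 0),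
      (forall i (p : nat), prime p -> exists j, ~~ (p%:Z %| a i j)%Z),
      (forall i i', i != i' -> ~ (hyp a i =i hyp a i')) &
      (forall x : 'rV[rat]_l, (forall i, x \in hyp a i) -> x = 0)].

Definition alpha (l n : nat) (a : 'I_n -> 'I_l -> int) (i : 'I_n) : {mpoly int[l]} :=
  \sum_(j < l) a i j *: 'X_j.

Definition defpoly (l n : nat) (a : 'I_n -> 'I_l -> int) : {mpoly int[l]} :=
  \prod_(i < n) alpha a i.

(* f in F_p[x] is reduced (square-free): any g with g^2 | f is a constant *)
Definition reduced_poly (l : nat) (F : nzRingType) (f : {mpoly F[l]}) : Prop :=
  forall g h : {mpoly F[l]}, f = g * g * h -> (msize g <= 1)%N.

Definition good (l n : nat) (a : 'I_n -> 'I_l -> int) (p : nat) : Prop :=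
  reduced_poly (map_mpoly (fun z : int => (z%:~R : 'F_p)) (defpoly a)).

Definition term_order (l : nat) (le : rel 'X_{1..l}) : Prop :=
  [/\ reflexive le, transitive le, antisymmetric le & total le] /\
  [/\ (forall m, le 0%MM m) &
      (forall m1 m2 m, le m1 m2 -> le (m1 + m)%MM (m2 + m)%MM)].

Definition is_lead (l : nat) (le : rel 'X_{1..l}) (f : {mpoly int[l]}) (m : 'X_{1..l}) : Prop :=
  m \in msupp f /\ {in msupp f, forall m', le m' m}.

Definition LM_dvd (l : nat) (le : rel 'X_{1..l}) (g f : {mpoly int[l]}) : Prop :=
  exists mg mf, [/\ is_lead le g mg, is_lead le f mf,
                    (g@_mg %| f@_mf)%Z & (mg <= mf)%MM].

Definition in_ideal (l : nat) (gens : seq {mpoly int[l]}) (f : {mpoly int[l]}) : Prop :=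
  exists h : 'I_(size gens) -> {mpoly int[l]},
    f = \sum_(i < size gens) h i * gens`_i.

Definition min_strong_GB (l : nat) (le : rel 'X_{1..l})
    (gens G : seq {mpoly int[l]}) : Prop :=
  [/\ (forall g, g \in G -> g != 0 /\ in_ideal gens g),
      (forall f, in_ideal gens f -> in_ideal G f),
      (forall f, in_ideal gens f -> f != 0 -> exists2 g, g \in G & LM_dvd le g f) &
      (forall g g', g \in G -> g' \in G -> g != g' -> ~ LM_dvd le g g')].

Definition lucky (l : nat) (le : rel 'X_{1..l}) (p : nat) (gens : seq {mpoly int[l]}) : Prop :=
  forall G, min_strong_GB le gens G ->
    forall g m, g \in G -> is_lead le g m -> ~ (p%:Z %| g@_m)%Z.

Definition k_lucky (l n : nat) (a : 'I_n -> 'I_l -> int) (le : rel 'X_{1..l})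
    (k p : nat) : Prop :=
  forall S : {set 'I_n}, #|S| = k -> codim_int a S = k ->
    lucky le p [seq alpha a i | i in S].

(* Each [alpha_i] is primitive, so its reduction
   mod [p] is a nonzero linear form, hence a prime of [F_p[x]]; a square factor
   of the reduction of [Q(A)] therefore makes two reductions proportional:
   [alpha_i - c alpha_j = p w] with [i <> j] and [w] an integral linear form.
   As [alpha_i] and [alpha_j] are linearly independent over [Q], the ideal
   [I = <alpha_i, alpha_j>], whose linear forms are exactly the integral
   combinations of [alpha_i] and [alpha_j], contains [p w] but not [w].  Now [I]
   has codimension 2 and, by Dickson's lemma, a minimal strong Groebner basis;
   if [p] divided none of its leading coefficients, reducing a linear form [f]
   with [p f] in [I] by that basis would show that [f] is in [I]. *)

From HB Require Import structures.
From mathcomp Require Import all_boot all_order all_algebra.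
From mathcomp Require Import mpoly.
From mathcomp Require Import zify ring.
From Stdlib Require Import Classical ClassicalEpsilon.
Set Implicit Arguments. Unset Strict Implicit. Unset Printing Implicit Defensive.
Import Order.TTheory GRing.Theory Num.Theory.
Local Open Scope ring_scope.

Lemma seq_max (T : eqType) (r : rel T) (s : seq T) :
  total r -> transitive r -> s != [::] ->
  exists2 x, x \in s & {in s, forall y, r y x}.
Proof.
move=> r_total r_trans; elim: s => // x s IH _.
have r_refl y : r y y by have := r_total y y; rewrite orbb.
case: s IH => [|y s] IH; first by exists x => [|z]; rewrite ?inE // => /eqP->.
have [z zs zmax] := IH isT.
have [xz|zx] := orP (r_total x z).
  by exists z => [|t]; rewrite inE ?zs ?orbT // => /orP[/eqP->|/zmax].
exists x => [|t]; first by rewrite inE eqxx.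
by rewrite inE => /orP[/eqP->|/zmax tz] //; apply: r_trans zx.
Qed.

Section Dickson.
Variable l : nat.

Let le_upto k (b m : 'X_{1..l}) := forall i : 'I_l, (i < k)%N -> (b i <= m i)%N.

(* Induction on the number [k] of coordinates taken into account; the values
   of coordinate [k] below the bound [N] are treated one at a time. *)
Lemma dickson_upto k (U : 'X_{1..l} -> Prop) :
  exists2 B : seq 'X_{1..l}, {in B, forall b, U b} &
    forall m, U m -> exists2 b, b \in B & le_upto k b m.
Proof.
elim: k U => [|k IH] U.
  have [[u Uu]|noU] := classic (exists u, U u).
    by exists [:: u] => [b /[1!inE] /eqP-> | m _] //; exists u; rewrite ?inE.
  by exists [::] => // m Um; case: noU; exists m.
have [kl|lk] := ltnP k l; last first.
  have [B BU HB] := IH U; exists B => // m /HB[b bB hb].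
  by exists b => // i ik; apply: hb; have := ltn_ord i; lia.
pose ik := Ordinal kl.
have le_uptoS b m : le_upto k b m -> (b ik <= m ik)%N -> le_upto k.+1 b m.
  move=> hb hk i; rewrite ltnS leq_eqVlt => /orP[/eqP ei|]; last exact: hb.
  by have -> : i = ik by apply: val_inj.
have [B BU HB] := IH U.
pose N := \max_(b <- B) b ik.
have low N' : exists2 B' : seq 'X_{1..l}, {in B', forall b, U b} &
    forall m, U m -> (m ik < N')%N -> exists2 b, b \in B' & le_upto k.+1 b m.
  elim: N' => [|e [B' B'U HB']]; first by exists [::].
  have [Be BeU HBe] := IH (fun m => U m /\ m ik = e).
  exists (B' ++ Be) => [b|m Um]; rewrite ?mem_cat.
    by case/orP => [/B'U|/BeU[]].
  rewrite ltnS leq_eqVlt => /orP[/eqP me|/(HB' m Um)[b bB hb]].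
    have [b bB hb] := HBe m (conj Um me); exists b; first by rewrite mem_cat bB orbT.
    by apply: le_uptoS hb _; have [_ ->] := BeU b bB; rewrite me.
  by exists b; rewrite ?mem_cat ?bB.
have [B' B'U HB'] := low N.
exists (B ++ B') => [b|m Um]; first by rewrite mem_cat => /orP[/BU|/B'U].
have [mN|Nm] := ltnP (m ik) N.
  by have [b bB hb] := HB' m Um mN; exists b; rewrite ?mem_cat ?bB ?orbT.
have [b bB hb] := HB m Um; exists b; first by rewrite mem_cat bB.
by apply: le_uptoS hb (leq_trans _ Nm); rewrite /N (big_rem b) //= leq_maxl.
Qed.

Lemma dickson (U : 'X_{1..l} -> Prop) :
  exists2 B : seq 'X_{1..l}, {in B, forall b, U b} &
    forall m, U m -> exists2 b, b \in B & (b <= m)%MM.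
Proof.
have [B BU HB] := dickson_upto l U; exists B => // m /HB[b bB hb].
by exists b => //; apply/mnm_lepP => i; apply: hb.
Qed.

End Dickson.

Section MonomialShift.
Variables (l : nat) (R : nzRingType).
Implicit Types (h : {mpoly R[l]}) (b d m : 'X_{1..l}).

Lemma mcoeffMX_sub h b m : (b <= m)%MM -> (h * 'X_[m - b])@_m = h@_b.
Proof. by move=> bm; rewrite -[X in mcoeff X _](submK bm) mcoeffMX. Qed.

Lemma mcoeffMX_lepm h d m : (h * 'X_[d])@_m = if (d <= m)%MM then h@_(m - d) else 0.
Proof.
case: ifP => dm; first by rewrite -[X in mcoeff X _](submK dm) addmC mcoeffMX.
apply/eqP; rewrite mcoeff_eq0 (perm_mem (msuppMX h d)).
by apply: contraFN dm => /mapP[m' _ ->]; rewrite lem_addr.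
Qed.

End MonomialShift.

Section TermOrder.
Variables (l : nat) (le : rel 'X_{1..l}).
Hypothesis le_order : term_order le.
Implicit Types (f g : {mpoly int[l]}) (m : 'X_{1..l}).

Lemma tord_trans : transitive le. Proof. by case: le_order => -[]. Qed.
Lemma tord_anti : antisymmetric le. Proof. by case: le_order => -[]. Qed.
Lemma tord_total : total le. Proof. by case: le_order => -[]. Qed.
Lemma tord0 m : le 0%MM m. Proof. by case: le_order => _ []. Qed.

Lemma tordD m1 m2 m : le m1 m2 -> le (m1 + m)%MM (m2 + m)%MM.
Proof. by case: le_order => _ [_]; apply. Qed.

Lemma tord_lepm m1 m2 : (m1 <= m2)%MM -> le m1 m2.
Proof. by move=> m12; have := tordD m1 (tord0 (m2 - m1)); rewrite add0m submK. Qed.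

Lemma tord_min (P : 'X_{1..l} -> Prop) m0 :
  P m0 -> exists2 m, P m & forall m', P m' -> le m m'.
Proof.
move=> Pm0; have [B BP HB] := dickson P; have [b0 b0B _] := HB m0 Pm0.
have ge_total : total (fun x y => le y x) by move=> x y; rewrite orbC tord_total.
have ge_trans : transitive (fun x y => le y x).
  by move=> x y z yx zy; apply: tord_trans zy yx.
have [|x xB xmin] := seq_max ge_total ge_trans (s := B); first by case: (B) b0B.
exists x => [|m' /HB[b bB bm']]; first exact: BP.
exact: tord_trans (xmin b bB) (tord_lepm bm').
Qed.

Lemma tord_ind (P : 'X_{1..l} -> Prop) :
  (forall m, (forall m', le m' m -> m' != m -> P m') -> P m) -> forall m, P m.
Proof.
move=> IH m; apply: NNPP => Pm.
have [m1 Pm1 m1min] := tord_min (P := fun m => ~ P m) Pm.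
apply: Pm1; apply: IH => m' m'm1 m'_neq; apply: NNPP => Pm'.
by case/eqP: m'_neq; apply: tord_anti; rewrite m'm1 m1min.
Qed.

Definition msupp_le f m := {in msupp f, forall m', le m' m}.

Lemma is_lead_uniq f m1 m2 : is_lead le f m1 -> is_lead le f m2 -> m1 = m2.
Proof. by move=> [m1f m1max] [m2f m2max]; apply: tord_anti; rewrite m2max ?m1max. Qed.

Lemma is_lead_exists f : f != 0 -> exists m, is_lead le f m.
Proof.
rewrite -msupp_eq0 => f_neq0.
by have [m mf mmax] := seq_max tord_total tord_trans f_neq0; exists m.
Qed.

Lemma is_lead_coef f m : is_lead le f m -> f@_m != 0.
Proof. by rewrite -mcoeff_msupp => -[]. Qed.

Lemma is_lead_neq0 f m : is_lead le f m -> f != 0.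
Proof. by move/is_lead_coef; apply: contraNneq => ->; rewrite mcoeff0. Qed.

Lemma msupp_le_lead f m : msupp_le f m -> f@_m != 0 -> is_lead le f m.
Proof. by rewrite -mcoeff_msupp. Qed.

Lemma msupp_leD f g m : msupp_le f m -> msupp_le g m -> msupp_le (f + g) m.
Proof. by move=> fm gm m' /msuppD_le; rewrite mem_cat => /orP[/fm|/gm]. Qed.

Lemma msupp_leZ c f m : msupp_le f m -> msupp_le (c *: f) m.
Proof. by move=> fm m' /msuppZ_le /fm. Qed.

Lemma msupp_leB f g m : msupp_le f m -> msupp_le g m -> msupp_le (f - g) m.
Proof. by move=> fm gm; rewrite -scaleN1r; apply/msupp_leD/msupp_leZ. Qed.

Lemma msupp_leMX f m d : msupp_le f m -> msupp_le (f * 'X_[d]) (m + d)%MM.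
Proof.
move=> fm m'; rewrite (perm_mem (msuppMX f d)) => /mapP[m'' /fm m''m ->].
by rewrite addmC; apply: tordD.
Qed.

Lemma is_leadMX_sub f b m : is_lead le f b -> (b <= m)%MM -> is_lead le (f * 'X_[m - b]) m.
Proof.
move=> fb bm; apply: msupp_le_lead; last by rewrite mcoeffMX_sub ?is_lead_coef.
by rewrite -[X in msupp_le _ X](submK bm) addmC; apply: msupp_leMX; case: fb.
Qed.

Lemma lead_ind (P : {mpoly int[l]} -> Prop) : P 0 ->
  (forall f m, is_lead le f m ->
     (forall f', msupp_le f' m -> f'@_m = 0 -> P f') -> P f) ->
  forall f, P f.
Proof.
move=> P0 IH f; have [->|/is_lead_exists[m fm]] := eqVneq f 0; first exact: P0.
elim/tord_ind: m f fm => m IHm f fm; apply: (IH f m fm) => g gm g0.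
have [->|/is_lead_exists[m' gm']] := eqVneq g 0; first exact: P0.
apply: (IHm m' _ _ g gm'); first by apply: gm; case: gm'.
by apply: contraTneq (is_lead_coef gm') => ->; rewrite g0.
Qed.

End TermOrder.

Lemma seq_choice (T U : eqType) (P : T -> U -> Prop) (s : seq T) :
  (forall x, x \in s -> exists y, P x y) ->
  exists2 t : seq U, (forall y, y \in t -> exists2 x, x \in s & P x y) &
                     (forall x, x \in s -> exists2 y, y \in t & P x y).
Proof.
elim: s => [|x s IH] Ps; first by exists [::].
have [|t tP sP] := IH; first by move=> z zs; apply: Ps; rewrite inE zs orbT.
have [y Pxy] := Ps x (mem_head x s).
exists (y :: t) => [z|z]; rewrite inE => /orP[/eqP->|].
- by exists x; rewrite ?mem_head.
- by case/tP=> z' z's Pz'; exists z'; rewrite ?inE ?z's ?orbT.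
- by exists y; rewrite ?mem_head.
- by case/sP=> y' y't Py'; exists y'; rewrite ?inE ?y't ?orbT.
Qed.

Lemma seq_antichain (T : eqType) (R : T -> T -> Prop) (s : seq T) :
  {in s, forall x, R x x} -> (forall x y z, R x y -> R y z -> R x z) ->
  exists G : seq T, [/\ {subset G <= s},
    (forall x, x \in s -> exists2 y, y \in G & R y x) &
    (forall y y', y \in G -> y' \in G -> y != y' -> ~ R y y')].
Proof.
move=> R_refl R_trans; elim: s R_refl => [|x s IH] R_refl; first by exists [::].
have [|G [Gs Gmin Ganti]] := IH; first by move=> z zs; apply: R_refl; rewrite inE zs orbT.
have [[y yG Ryx]|xmin] := classic (exists2 y, y \in G & R y x).
  exists G; split => [z /Gs zs||//]; first by rewrite inE zs orbT.
  by move=> z; rewrite inE => /orP[/eqP->|/Gmin]; first by exists y.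
pose Gx := [seq y <- G | ~~ excluded_middle_informative (R x y)].
have GxP y : y \in Gx = (y \in G) && ~~ excluded_middle_informative (R x y).
  by rewrite mem_filter andbC.
exists (x :: Gx); split => [z|z|y y'].
- by rewrite !inE GxP => /orP[/eqP->|/andP[/Gs ->]]; rewrite ?eqxx ?orbT.
- rewrite inE => /orP[/eqP->|/Gmin[y yG Ryz]].
    by exists x; [rewrite mem_head | apply: R_refl; rewrite mem_head].
  have [Rxy|nRxy] := sumboolP (excluded_middle_informative (R x y)).
    by exists x; [rewrite mem_head | apply: R_trans Rxy Ryz].
  exists y => //; rewrite inE GxP yG /=.
  by case: (excluded_middle_informative (R x y)) => //= _; rewrite orbT.
rewrite !inE !GxP.
move=> /orP[/eqP->|/andP[yG /sumboolP nRxy]] /orP[/eqP->|/andP[y'G /sumboolP nRxy']] //.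
- by rewrite eqxx.
- by move=> _ Ryx; apply: xmin; exists y.
- exact: Ganti.
Qed.

Section Ideal.
Variables (l : nat) (gens : seq {mpoly int[l]}).
Implicit Types (f g r : {mpoly int[l]}).
Local Notation I := (in_ideal gens).

Lemma in_ideal0 : I 0.
Proof. by exists (fun=> 0); rewrite big1 // => i _; rewrite mul0r. Qed.

Lemma in_idealD f g : I f -> I g -> I (f + g).
Proof.
move=> [h ->] [h' ->]; exists (fun i => h i + h' i).
by rewrite -big_split; apply: eq_bigr => i _; rewrite mulrDl.
Qed.

Lemma in_idealMl r f : I f -> I (r * f).
Proof.
move=> [h ->]; exists (fun i => r * h i).
by rewrite mulr_sumr; apply: eq_bigr => i _; rewrite mulrA.
Qed.

Lemma in_idealZ c f : I f -> I (c *: f).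
Proof. by rewrite -mul_mpolyC; apply: in_idealMl. Qed.

Lemma in_idealB f g : I f -> I g -> I (f - g).
Proof. by move=> If Ig; rewrite -scaleN1r; apply/in_idealD/in_idealZ. Qed.

Lemma in_ideal_mem g : g \in gens -> I g.
Proof.
rewrite -index_mem => gin; exists (fun j => (j == Ordinal gin)%:R).
rewrite (bigD1 (Ordinal gin)) //= eqxx mul1r nth_index -?index_mem //.
by rewrite big1 ?addr0 // => j /negbTE->; rewrite mul0r.
Qed.

End Ideal.

Section StrongGroebnerBasis.
Variables (l : nat) (le : rel 'X_{1..l}).
Hypothesis le_order : term_order le.
Variable gens : seq {mpoly int[l]}.
Implicit Types (f g : {mpoly int[l]}) (m : 'X_{1..l}) (c : int).
Local Notation I := (in_ideal gens).

Definition ideal_lead m c := exists2 f, I f & is_lead le f m /\ f@_m = c.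

Lemma ideal_lead_neq0 m c : ideal_lead m c -> c != 0.
Proof. by case=> f _ [fm <-]; apply: is_lead_coef fm. Qed.

Lemma ideal_lead_shift b m c : ideal_lead b c -> (b <= m)%MM -> ideal_lead m c.
Proof.
move=> [f If [fb <-]] bm; exists (f * 'X_[m - b]).
  by rewrite mulrC; apply: in_idealMl.
by rewrite mcoeffMX_sub //; split=> //; exact: (is_leadMX_sub le_order fb bm).
Qed.

(* Bezout: the leading coefficients at a fixed monomial form an ideal of Z. *)
Lemma ideal_lead_gcd m c c' :
  ideal_lead m c -> ideal_lead m c' -> ideal_lead m (gcdz c c').
Proof.
move=> [f If [fm fc]] [f' If' [f'm f'c]]; have [u [v uv]] := Bezoutz c c'.
have coef : (u *: f + v *: f')@_m = gcdz c c' by rewrite mcoeffD !mcoeffZ fc f'c uv.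
exists (u *: f + v *: f'); first by apply: in_idealD; apply: in_idealZ.
split=> //; apply: msupp_le_lead; last first.
  by rewrite coef gcdz_eq0 negb_and -fc (is_lead_coef fm).
by apply: msupp_leD; apply: msupp_leZ; [case: fm | case: f'm].
Qed.

Definition lead_cover (e : int) (Ge : seq {mpoly int[l]}) :=
  {in Ge, forall g, g != 0 /\ I g} /\
  forall m c, ideal_lead m c -> (c %| e)%Z ->
    exists2 g, g \in Ge & exists mg, [/\ is_lead le g mg, (mg <= m)%MM & (g@_mg %| e)%Z].

Lemma ideal_lead_cover e : exists Ge, lead_cover e Ge.
Proof.
have [B BU Bmin] := dickson (fun m => exists2 c, ideal_lead m c & (c %| e)%Z).
have [|Ge Ge_lead B_Ge] := seq_choice (P := fun b g =>
    [/\ g != 0, I g, is_lead le g b & (g@_b %| e)%Z]) (s := B).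
  move=> b /BU[c [f If [fb fc]] ce]; exists f.
  by rewrite fc; split=> //; apply: is_lead_neq0 fb.
exists Ge; split=> [g /Ge_lead[b _ []] //|m c mc ce].
have [b bB bm] := Bmin m (ex_intro2 _ _ c mc ce).
by have [g gGe [_ _ gb ge]] := B_Ge b bB; exists g => //; exists b.
Qed.

(* Dickson's lemma gives finitely many minimal leading monomials [b] of [I],
   with leading coefficients [c_b].  A leading term [c x^m] of [I] with
   [b <= m] can be improved to [gcd(c, c_b) x^m], so the finitely many bounds
   [e | c_b] suffice. *)
Lemma strong_cover_exists : exists2 G : seq {mpoly int[l]},
  {in G, forall g, g != 0 /\ I g} &
  forall f, I f -> f != 0 -> exists2 g, g \in G & LM_dvd le g f.
Proof.
have [B BU Bmin] := dickson (fun m => exists c, ideal_lead m c).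
have [Cs Cs_lead B_Cs] := seq_choice BU.
pose E := flatten [seq divisors `|c| | c <- Cs].
have [|Gs Gs_cover E_Gs] := seq_choice (s := E) (P := fun e => lead_cover e%:Z).
  by move=> e _; apply: ideal_lead_cover.
exists (flatten Gs) => [g /flattenP[Ge /Gs_cover[e _ [Ge_ideal _]] /Ge_ideal] //|f If f0].
have [m fm] := is_lead_exists le_order f0.
have mf : ideal_lead m f@_m by exists f.
have [b bB bm] := Bmin m (ex_intro _ _ mf).
have [cb cbCs bcb] := B_Cs b bB.
have cb0 := ideal_lead_neq0 bcb.
have mgcd := ideal_lead_gcd mf (ideal_lead_shift bcb bm).
have eE : gcdn `|f@_m| `|cb| \in E.
  apply/flattenP; exists (divisors `|cb|); first exact: map_f.
  by rewrite -dvdn_divisors ?absz_gt0 ?dvdn_gcdr.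
have [Ge GeGs [_ Ge_min]] := E_Gs _ eE.
have [g gGe [mg [gmg mgm ge]]] := Ge_min m _ mgcd (dvdzz _).
exists g; first by apply/flattenP; exists Ge.
by exists mg, m; split=> //; apply: dvdz_trans ge (dvdz_gcdl _ _).
Qed.

Lemma LM_dvd_trans f g h : LM_dvd le f g -> LM_dvd le g h -> LM_dvd le f h.
Proof.
move=> [m1 [m2 [fm1 gm2 d12 l12]]] [m3 [m4 [gm3 hm4 d34 l34]]].
rewrite (is_lead_uniq le_order gm2 gm3) in d12 l12.
by exists m1, m4; split=> //; [apply: dvdz_trans d34 | apply: lepm_trans l34].
Qed.

Lemma LM_dvd_refl f : f != 0 -> LM_dvd le f f.
Proof.
by move/(is_lead_exists le_order)=> [m fm]; exists m, m; rewrite dvdzz lepm_refl.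
Qed.

(* Division by [G]: cancel the leading term of [f] with a monomial multiple of
   the [g] whose leading term divides it, and recurse on the remainder. *)
Lemma strong_cover_generates (G : seq {mpoly int[l]}) :
  {in G, forall g, g != 0 /\ I g} ->
  (forall f, I f -> f != 0 -> exists2 g, g \in G & LM_dvd le g f) ->
  forall f, I f -> in_ideal G f.
Proof.
move=> G_ideal G_cover; elim/(lead_ind le_order) => [_|f m fm IH If].
  exact: in_ideal0.
have [g gG [mg [m' [gmg fm' gf mgm]]]] := G_cover f If (is_lead_neq0 fm).
rewrite (is_lead_uniq le_order fm' fm) in gf mgm.
pose q := (f@_m %/ g@_mg)%Z; pose h := q *: (g * 'X_[m - mg]).
have Gh : in_ideal G h by apply/in_idealZ; rewrite mulrC; apply/in_idealMl/in_ideal_mem.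
have Ih : I h by apply/in_idealZ; rewrite mulrC; apply/in_idealMl; case: (G_ideal g gG).
have -> : f = (f - h) + h by rewrite subrK.
apply: in_idealD Gh; apply: IH; last exact: in_idealB.
  by apply: msupp_leB; [case: fm | apply/msupp_leZ; case: (is_leadMX_sub le_order gmg mgm)].
by rewrite mcoeffB mcoeffZ mcoeffMX_sub // divzK // subrr.
Qed.

Lemma min_strong_GB_exists : exists G, min_strong_GB le gens G.
Proof.
have [G0 G0_ideal G0_cover] := strong_cover_exists.
have [||G [GG0 G_cover G_anti]] := seq_antichain (R := LM_dvd le) (s := G0).
- by move=> g /G0_ideal[g0 _]; apply: LM_dvd_refl.
- exact: LM_dvd_trans.
have G_ideal : {in G, forall g, g != 0 /\ I g} by move=> g /GG0/G0_ideal.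
have G_cover' f : I f -> f != 0 -> exists2 g, g \in G & LM_dvd le g f.
  move=> If f0; have [g0 /G_cover[g gG gg0] g0f] := G0_cover f If f0.
  by exists g => //; apply: LM_dvd_trans g0f.
exists G; split=> //; first exact: strong_cover_generates.
Qed.

End StrongGroebnerBasis.

Lemma lepm_mnm1 l (m : 'X_{1..l}) k : (m <= U_(k))%MM -> m = 0%MM \/ m = U_(k)%MM.
Proof.
move/mnm_lepP => mk; have [mk0|mk0] := eqVneq (m k) 0%N; [left|right];
  apply/mnmP => i; rewrite ?mnm0E ?mnm1E; have := mk i; rewrite mnm1E;
  by case: eqVneq => [<-|] //=; lia.
Qed.

Section LinearForms.
Variables (l : nat) (R : comNzRingType).
Implicit Types (w v : 'I_l -> R) (h : {mpoly R[l]}).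

Definition linform w : {mpoly R[l]} := \sum_(j < l) w j *: 'X_j.

Definition linpart h := linform (fun k => h@_U_(k)).

Lemma mcoeff_linform w m : (linform w)@_m = \sum_(j < l) w j * (U_(j)%MM == m)%:R.
Proof. by rewrite /linform raddf_sum /=; apply: eq_bigr => j _; rewrite mcoeffZ mcoeffX. Qed.

Lemma mcoeff_linformU w k : (linform w)@_U_(k) = w k.
Proof.
rewrite mcoeff_linform (bigD1 k) //= eqxx mulr1 big1 ?addr0 // => j jk.
by rewrite eq_mnm1 (negbTE jk) mulr0.
Qed.

Lemma msupp_linform w m : m \in msupp (linform w) -> exists2 k, m = U_(k)%MM & w k != 0.
Proof.
rewrite mcoeff_msupp; have [k /eqP <-|noU] := pickP (fun j => U_(j)%MM == m).
  by rewrite mcoeff_linformU; exists k.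
by rewrite mcoeff_linform big1 ?eqxx // => j _; rewrite noU mulr0.
Qed.

Lemma linformB w v : linform (fun k => w k - v k) = linform w - linform v.
Proof. by rewrite -sumrB; apply: eq_bigr => j _; rewrite scalerBl. Qed.

Lemma linformZ c w : linform (fun k => c * w k) = c *: linform w.
Proof. by rewrite scaler_sumr; apply: eq_bigr => j _; rewrite scalerA. Qed.

Lemma msize_linform w k : w k != 0 -> msize (linform w) = 2%N.
Proof.
move=> wk; apply/eqP; rewrite eqn_leq; apply/andP; split.
  by rewrite msizeE; apply/bigmax_leqP_seq => m /msupp_linform[j -> _] _; rewrite mdeg1.
have : U_(k)%MM \in msupp (linform w) by rewrite mcoeff_msupp mcoeff_linformU.
by move/msize_mdeg_lt; rewrite mdeg1.
Qed.

Lemma mcoeffM_linform0 h w : (h * linform w)@_0%MM = 0.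
Proof.
rewrite mulr_sumr raddf_sum /= big1 // => j _.
rewrite -scalerAr mcoeffZ mcoeffMX_lepm; case: ifP; rewrite ?mulr0 //.
by move/mnm_lepP/(_ j); rewrite mnm1E eqxx mnm0E.
Qed.

Lemma mcoeffM_linformU h w k : (h * linform w)@_U_(k) = h@_0%MM * w k.
Proof.
rewrite mulr_sumr raddf_sum /= (bigD1 k) //= big1 ?addr0 => [|j jk].
  by rewrite -scalerAr mcoeffZ -[X in mcoeff X _]addm0 mcoeffMX mulrC.
rewrite -scalerAr mcoeffZ mcoeffMX_lepm; case: ifP; rewrite ?mulr0 //.
by move/mnm_lepP/(_ j); rewrite !mnm1E eqxx eq_sym (negbTE jk).
Qed.

Lemma linpart_linform w : linpart (linform w) = linform w.
Proof. by apply: eq_bigr => j _; rewrite mcoeff_linformU. Qed.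

Lemma linpartM_linform h w : linpart (h * linform w) = h@_0%MM *: linform w.
Proof. by rewrite /linpart -linformZ; apply: eq_bigr => j _; rewrite mcoeffM_linformU. Qed.

Lemma linpart_sum n (F : 'I_n -> {mpoly R[l]}) :
  linpart (\sum_(r < n) F r) = \sum_(r < n) linpart (F r).
Proof.
apply: (big_morph linpart) => [f g|].
  by rewrite /linpart -big_split; apply: eq_bigr => j _; rewrite mcoeffD scalerDl.
by rewrite /linpart /linform big1 // => j _; rewrite mcoeff0 scale0r.
Qed.

Lemma msupp_linpart h m : m \in msupp (linpart h) -> m \in msupp h.
Proof. by case/msupp_linform=> k -> hk; rewrite mcoeff_msupp. Qed.

End LinearForms.

Definition in_zspan l (gens : seq {mpoly int[l]}) (f : {mpoly int[l]}) :=
  exists c : 'I_(size gens) -> int, f = \sum_(r < size gens) c r *: gens`_r.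

Section IdealOfLinearForms.
Variables (l : nat) (gens : seq {mpoly int[l]}).
Hypothesis gens_linear : {in gens, forall g, exists w, g = linform w}.
Implicit Types (f g : {mpoly int[l]}) (w : 'I_l -> int).
Local Notation I := (in_ideal gens).

Lemma ideal_mcoeff0 f : I f -> f@_0%MM = 0.
Proof.
move=> [h ->]; rewrite raddf_sum big1 //= => r _.
by have [w ->] := gens_linear (mem_nth 0 (ltn_ord r)); rewrite mcoeffM_linform0.
Qed.

Lemma ideal_linpart f : I f -> in_zspan gens (linpart f).
Proof.
move=> [h ->]; exists (fun r => (h r)@_0%MM); rewrite linpart_sum.
apply: eq_bigr => r _; have [w wE] := gens_linear (mem_nth 0 (ltn_ord r)).
by rewrite wE linpartM_linform.
Qed.

Lemma zspan_ideal f : in_zspan gens f -> I f.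
Proof.
move=> [c ->]; elim/big_rec: _ => [|r f' _ If']; first exact: in_ideal0.
by apply/in_idealD/If'/in_idealZ/in_ideal_mem/mem_nth.
Qed.

Variable le : rel 'X_{1..l}.
Hypothesis le_order : term_order le.

(* Reduce [f] by the basis element [g] whose leading term [g_k x_k] divides
   that of [p f]: as [p] does not divide [g_k], already [g_k | f_k], and the
   linear part of [g] lies in the ideal. *)
Lemma lucky_saturated G p : min_strong_GB le gens G -> prime p ->
  (forall g m, g \in G -> is_lead le g m -> ~ (p%:Z %| g@_m)%Z) ->
  forall w, I (p%:Z *: linform w) -> I (linform w).
Proof.
move=> [G_ideal _ G_cover _] p_prime G_lucky.
have p0 : p%:Z != 0 by rewrite eqz_nat -lt0n prime_gt0.
suff sat f w : f = linform w -> I (p%:Z *: f) -> I f by move=> w; apply: sat.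
elim/(lead_ind le_order): f w => [|f m fm IH] w fw Ipf; first exact: in_ideal0.
have := proj1 fm; rewrite {1}fw => /msupp_linform[k mk wk].
subst m; have fk : f@_U_(k) = w k by rewrite fw mcoeff_linformU.
have pfk : is_lead le (p%:Z *: f) U_(k).
  apply: msupp_le_lead; first by apply: msupp_leZ; case: fm.
  by rewrite mcoeffZ fk mulf_neq0.
have [g gG [mg [m' [gmg pfm' gpf mgm]]]] := G_cover _ Ipf (is_lead_neq0 pfk).
rewrite (is_lead_uniq le_order pfm' pfk) mcoeffZ fk in gpf mgm.
have [_ Ig] := G_ideal g gG.
have mgk : mg = U_(k)%MM.
  case: (lepm_mnm1 mgm) => // mg0; case/negP: (is_lead_coef gmg).
  by rewrite mg0 ideal_mcoeff0.
subst mg; have gk_w : (g@_U_(k) %| w k)%Z.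
  rewrite -(@Gauss_dvdzr _ p%:Z) // coprimez_sym coprimezE /= prime_coprime //.
  by apply/negP; exact: (G_lucky _ _ gG gmg).
pose q := (w k %/ g@_U_(k))%Z; pose v k' := g@_U_(k').
have Iv : I (linform v) by apply/zspan_ideal/ideal_linpart.
have -> : f = (f - q *: linform v) + q *: linform v by rewrite subrK.
apply/in_idealD/in_idealZ/Iv; apply: (IH _ _ _ (fun j => w j - q * v j)).
- apply: msupp_leB; first by case: fm.
  by apply/msupp_leZ => m /msupp_linpart; case: gmg => _; apply.
- by rewrite mcoeffB mcoeffZ fk mcoeff_linformU divzK // subrr.
- by rewrite linformB linformZ fw.
- by rewrite scalerBr scalerA; apply/in_idealB/in_idealZ/Iv.
Qed.

End IdealOfLinearForms.

Section PrimeLinearForms.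
Variables (l : nat) (F : fieldType).
Implicit Types (f g h L : {mpoly F[l]}).

Definition mdvd L f := exists h, f = h * L.

Definition mprime L := L != 0 /\ forall f g, mdvd L (f * g) -> mdvd L f \/ mdvd L g.

Lemma mdvd_sub_comp L (t : l.-tuple {mpoly F[l]}) :
  (forall j, mdvd L ('X_j - t`_j)) -> forall f, mdvd L (f - (f \mPo t)).
Proof.
move=> tX; pose D f := mdvd L (f - (f \mPo t)).
have DD f g : D f -> D g -> D (f + g).
  by move=> [h1 e1] [h2 e2]; exists (h1 + h2); rewrite rmorphD /= opprD addrACA e1 e2 mulrDl.
have DM f g : D f -> D g -> D (f * g).
  move=> [h1 e1] [h2 e2]; exists (h1 * g + (f \mPo t) * h2).
  rewrite rmorphM /= mulrDl -mulrA [g * L]mulrC mulrA -e1 -mulrA -e2.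
  by rewrite mulrBl mulrBr addrA subrK.
have D1 : D 1 by exists 0; rewrite rmorph1 subrr mul0r.
elim/mpolyind => [|c m f _ _ Df]; first by exists 0; rewrite raddf0 subr0 mul0r.
apply: DD => //; have [h e] : D 'X_[m].
  rewrite mpolyXE_id; apply: (big_ind D) => // i _.
  elim: (m i) => [|e IH]; rewrite ?expr0 // exprS; apply: DM => //.
  by rewrite /D comp_mpolyXU.
by exists (c *: h); rewrite comp_mpolyZ -scalerBr e scalerAl.
Qed.

(* The substitution [x_k := x_k - L / c_k] kills [L] and is the identity
   modulo [L], so [L] divides exactly the polynomials it kills. *)
Lemma linform_prime (c : 'I_l -> F) k : c k != 0 -> mprime (linform c).
Proof.
move=> ck; set L := linform c.
pose t := [tuple 'X_j - (j == k)%:R *: ((c k)^-1 *: L) | j < l].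
have tE (j : 'I_l) : t`_j = 'X_j - (j == k)%:R *: ((c k)^-1 *: L).
  by rewrite -tnth_nth tnth_mktuple.
have tL : L \mPo t = 0.
  rewrite {1}/L /linform raddf_sum /=.
  under eq_bigr do rewrite comp_mpolyZ comp_mpolyXU tE scalerBr.
  rewrite sumrB [X in _ - X](bigD1 k) //= [X in _ - (_ + X)]big1 => [|j /negbTE->].
    by rewrite eqxx scale1r scalerA mulfV // scale1r addr0 subrr.
  by rewrite scale0r scaler0.
have Lmod f : mdvd L (f - (f \mPo t)).
  apply: mdvd_sub_comp => j; exists ((j == k)%:R * (c k)^-1)%:MP.
  by rewrite tE opprB addrC subrK mul_mpolyC scalerA.
split=> [|f g [h fg]].
  by apply: contraNneq ck => L0; rewrite -(mcoeff_linformU c k) -/L L0 mcoeff0.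
have /eqP : (f \mPo t) * (g \mPo t) = 0 by rewrite -rmorphM /= fg rmorphM /= tL mulr0.
by rewrite mulf_eq0 => /orP[] /eqP t0; [left|right]; rewrite -[X in mdvd _ X]subr0 -t0.
Qed.

Lemma mdvd_prod L n (M : 'I_n -> {mpoly F[l]}) :
  mprime L -> msize L = 2%N -> mdvd L (\prod_(i < n) M i) -> exists i, mdvd L (M i).
Proof.
move=> [L0 Lprime] L2; elim: n M => [|n IH] M.
  rewrite big_ord0 => -[h h1].
  have h0 : h != 0 by apply: contraPneq h1 => ->; rewrite mul0r => /eqP; rewrite oner_eq0.
  have := congr1 (fun q => msize q) h1; rewrite msizeM // msize1 L2 addn2.
  by case=> /esym/eqP; rewrite msize_poly_eq0 (negbTE h0).
rewrite big_ord_recl => /Lprime[]; first by exists ord0.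
by move/IH=> [i]; exists (lift ord0 i).
Qed.

Lemma reduced_prod_mprime n (L : 'I_n -> {mpoly F[l]}) :
  (forall i, mprime (L i) /\ msize (L i) = 2%N) ->
  (forall i j (u : F), L i = u *: L j -> i = j) ->
  reduced_poly (\prod_(i < n) L i).
Proof.
elim: n L => [|n IH] L Lprime Lassoc g h.
  rewrite big_ord0 => gh1.
  have [g0 h0] : g != 0 /\ h != 0.
    by split; apply: contraPneq gh1 => ->; rewrite ?mul0r ?mulr0 => /eqP; rewrite oner_eq0.
  have := congr1 (fun q => msize q) gh1; rewrite !msizeM ?mulf_neq0 // msize1.
  move: (msize_poly_eq0 g) (msize_poly_eq0 h); rewrite (negbTE g0) (negbTE h0).
  by move: (msize g) (msize h) => a b; lia.
rewrite big_ord_recl; set P := \prod_(i < n) _ => LP.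
have [[L00 L0prime] L02] := Lprime ord0.
have [[g' gE]|[h' hE]] : mdvd (L ord0) g \/ mdvd (L ord0) h.
- have : mdvd (L ord0) (g * (g * h)) by exists P; rewrite mulrA -LP mulrC.
  by case/L0prime => [|/L0prime[]]; [left|left|right].
- have [i [q Li]] : exists i, mdvd (L ord0) (L (lift ord0 i)).
    apply: mdvd_prod (conj L00 L0prime) L02 _.
    by exists (g' * g' * h); apply: (mulfI L00); rewrite LP gE; ring.
  have [[Li0 _] Li2] := Lprime (lift ord0 i).
  have q0 : q != 0 by apply: contraNneq Li0 => q0; rewrite Li q0 mul0r.
  have q1 : (msize q <= 1)%N.
    by have := congr1 (fun q => msize q) Li; rewrite msizeM // Li2 L02 addn2 => -[<-].
  have := Lassoc (lift ord0 i) ord0 q@_0%MM.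
  rewrite Li {1}(msize1_polyC q1) mul_mpolyC => /(_ erefl) /eqP.
  by rewrite eq_sym (negbTE (neq_lift _ _)).
have LP' : P = g * g * h' by apply: (mulfI L00); rewrite LP hE; ring.
have := IH (fun i => L (lift ord0 i)) (fun i => Lprime _) _ g h' LP'; apply.
by move=> i j u /Lassoc /lift_inj.
Qed.

End PrimeLinearForms.

Section Arrangement.
Variables (l n : nat) (a : 'I_n -> 'I_l -> int).
Hypothesis arr : arrangement a.
Local Notation A := (arr_mx a).

Lemma arr_col_neq0 i : col i A != 0.
Proof.
case: arr => nz _ _ _; have [k aik] := nz i.
by apply/eqP => /matrixP/(_ k 0); rewrite !mxE => /eqP; rewrite intr_eq0 (negbTE aik).
Qed.

Lemma arr_col_indep i j (u v : rat) : i != j ->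
  u *: col i A + v *: col j A = 0 -> u = 0 /\ v = 0.
Proof.
move=> ij uv; have scale0 c k : c *: col k A = 0 -> c = 0.
  by move/eqP; rewrite scaler_eq0 (negbTE (arr_col_neq0 k)) orbF => /eqP.
have [u0|u0] := eqVneq u 0.
  by split=> //; apply: (scale0 _ j); rewrite -uv u0 scale0r add0r.
have [v0|v0] := eqVneq v 0.
  by case/eqP: u0; apply: (scale0 _ i); rewrite -uv v0 scale0r addr0.
case: arr => _ _ distinct _; case: (distinct i j ij) => x; rewrite !inE.
have cancel c (M : 'M[rat]_(l, 1)) : c != 0 -> (x *m M == 0) = (x *m (c *: M) == 0).
  by move=> c0; rewrite -scalemxAr scaler_eq0 (negbTE c0).
rewrite (cancel u) // [RHS](cancel v) //.
have -> : u *: col i A = - (v *: col j A) by rewrite -[LHS]subr0 -uv opprD addNKr.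
by rewrite mulmxN oppr_eq0.
Qed.

Lemma arr_indep_int i j (u v : int) : i != j ->
  (forall k, u * a i k + v * a j k = 0) -> u = 0 /\ v = 0.
Proof.
move=> ij uv; have [|/eqP u0 /eqP v0] := arr_col_indep (u := u%:~R) (v := v%:~R) ij.
- by apply/matrixP => k c; rewrite !mxE -!intrM -intrD uv.
- by move: u0 v0; rewrite !intr_eq0 => /eqP-> /eqP->.
Qed.

Lemma arr_codim2 i j : i != j -> codim_int a [set i; j] = 2%N.
Proof.
move=> ij; rewrite /codim_int mxrank_ker subKn ?rank_leq_row //.
set AS := arr_mxS a _; pose sel (r : 'I_2) := if val r == 0%N then i else j.
have ASsel k r : AS k (sel r) = A k (sel r).
  by rewrite !mxE in_set2 /sel; case: (val r == 0%N); rewrite eqxx ?orbT.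
apply/eqP; rewrite eqn_leq; apply/andP; split.
  have -> : AS = colsub sel AS *m \matrix_(r, c) (sel r == c)%:R.
    apply/matrixP => k c; rewrite !mxE big_ord_recl big_ord1 !mxE /sel /=.
    rewrite !in_set2 !eqxx ?orbT /=.
    have [->|_] /= := eqVneq c i; first by rewrite (eq_sym j) (negbTE ij) mulr1 mulr0 addr0.
    by rewrite (eq_sym j); case: eqVneq => [->|_]; rewrite ?mulr0 ?mulr1 ?addr0 ?add0r.
  exact: leq_trans (mxrankM_maxr _ _) (rank_leq_row _).
apply: (@leq_trans (\rank (colsub sel AS))); last first.
  by rewrite -[X in colsub _ X]mulmx1 -mulmx_colsub mxrankM_maxl.
rewrite -mxrank_tr row_leq_rank; apply: inj_row_free => v vX.
have [|v0 v1] := arr_col_indep (u := v 0 0) (v := v 0 1) ij.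
  apply/matrixP => k c; have := congr1 (fun M : 'M[rat]_(1, l) => M 0 k) vX.
  have o0 : ord0 = 0 :> 'I_2 by apply: val_inj.
  have o1 : lift ord0 ord0 = 1 :> 'I_2 by apply: val_inj.
  by rewrite !mxE big_ord_recl big_ord1 !mxE /sel /= !in_set2 !eqxx ?orbT /= o0 o1.
apply/rowP => r; rewrite mxE.
by have [->|->] : r = 0 \/ r = 1 by case: r => [[|[|]]] // ? ; [left|right]; apply: val_inj.
Qed.

Section PairIdeal.
Variables (i j : 'I_n).
Local Notation gens := [seq alpha a x | x in [set i; j]].

Lemma pair_gens_linear : {in gens, forall g, exists w, g = linform w}.
Proof. by move=> g /mapP[x _ ->]; exists (a x). Qed.

Lemma alpha_pair_ideal x : x \in [set i; j] -> in_ideal gens (alpha a x).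
Proof. by move=> xS; apply/in_ideal_mem/map_f; rewrite mem_enum. Qed.

Lemma zspan_pair f : in_zspan gens f -> exists u v, f = u *: alpha a i + v *: alpha a j.
Proof.
move=> [c ->]; elim/big_rec: _ => [|r f' _ [u [v ->]]].
  by exists 0, 0; rewrite !scale0r addr0.
have /mapP[x] := mem_nth 0 (ltn_ord r); rewrite mem_enum in_set2 => /orP[] /eqP-> ->.
  by exists (c r + u), v; rewrite scalerDl addrA.
by exists u, (c r + v); rewrite scalerDl addrCA addrA.
Qed.

(* [w = u alpha_i + v alpha_j] would give
   [(p u - 1) alpha_i + (p v + c) alpha_j = 0], hence [p u = 1]. *)
Lemma pair_ideal_not_saturated p (c : int) (w : 'I_l -> int) : i != j -> prime p ->
  (forall k, a i k - c * a j k = p%:Z * w k) ->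
  in_ideal gens (p%:Z *: linform w) /\ ~ in_ideal gens (linform w).
Proof.
move=> ij p_prime pw; split.
  have -> : p%:Z *: linform w = linform (fun k => a i k - c * a j k).
    by rewrite -linformZ; apply: eq_bigr => k _; rewrite pw.
  rewrite (linformB (a i)) (linformZ c (a j)).
  by apply/in_idealB/in_idealZ; apply: alpha_pair_ideal; rewrite in_set2 eqxx ?orbT.
move/(ideal_linpart pair_gens_linear); rewrite linpart_linform => /zspan_pair[u [v wE]].
have wk k : w k = u * a i k + v * a j k.
  by have := congr1 (mcoeff U_(k)) wE; rewrite mcoeffD !mcoeffZ !mcoeff_linformU.
have [|/eqP pu1 _] := arr_indep_int (u := p%:Z * u - 1) (v := p%:Z * v + c) ij.
  move=> k; transitivity (p%:Z * (u * a i k + v * a j k) - (a i k - c * a j k)); first ring.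
  by rewrite -wk pw subrr.
move: pu1; rewrite subr_eq0 => /eqP/(congr1 absz); rewrite abszM /= => /eqP.
by rewrite muln_eq1 => /andP[/eqP p1 _]; move: p_prime; rewrite p1.
Qed.

End PairIdeal.

End Arrangement.

Lemma map_linform l (R S : comNzRingType) (f : {rmorphism R -> S}) (w : 'I_l -> R) :
  map_mpoly f (linform w) = linform (fun k => f (w k)).
Proof.
by rewrite /linform raddf_sum /=; apply: eq_bigr => k _; rewrite map_mpolyZ map_mpolyX.
Qed.

Lemma Fp_proportional_lift l p (x y : 'I_l -> int) (u : 'F_p) : prime p ->
  (forall k, (x k)%:~R = u * (y k)%:~R :> 'F_p) ->
  exists c : int, exists w : 'I_l -> int, forall k, x k - c * y k = p%:Z * w k.
Proof.
move=> p_prime xy; exists (val u)%:Z, (fun k => ((x k - (val u)%:Z * y k) %/ p)%Z).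
move=> k; rewrite [p%:Z * _]mulrC divzK // (dvdz_pcharf (pchar_Fp p_prime)).
by rewrite rmorphB rmorphM /= xy -pmulrn natr_Zp subrr.
Qed.

Theorem theorem6p3 (l n : nat) (a : 'I_n -> 'I_l -> int) (le : rel 'X_{1..l}) (p : nat) :
  arrangement a -> term_order le -> prime p ->
  k_lucky a le 2 p -> good a p.
Proof.
move=> arr le_order p_prime lucky2; have p_char := pchar_Fp p_prime.
rewrite /good /defpoly rmorph_prod /=; under eq_bigr do rewrite map_linform.
apply: reduced_prod_mprime => [i|i j u red_ij].
  have [_ primitive _ _] := arr; have [k aik] := primitive i p p_prime.
  rewrite (dvdz_pcharf p_char) in aik.
  by split; [exact: (linform_prime aik) | exact: (msize_linform aik)].
apply/eqP/negPn/negP => ij.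
have red_k k : (a i k)%:~R = u * (a j k)%:~R :> 'F_p.
  by have := congr1 (mcoeff U_(k)) red_ij; rewrite mcoeffZ !mcoeff_linformU.
have [c [w pw]] := Fp_proportional_lift p_prime red_k.
have [Ipw Iw] := pair_ideal_not_saturated arr ij p_prime pw.
have [G GB] := min_strong_GB_exists le_order [seq alpha a x | x in [set i; j]].
have lucky_ij : forall g m, g \in G -> is_lead le g m -> ~ (p%:Z %| g@_m)%Z.
  by apply: lucky2 GB; [rewrite cards2 ij | exact: arr_codim2].
exact: Iw (lucky_saturated (@pair_gens_linear l n a i j) le_order GB p_prime lucky_ij Ipw).
Qed.
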